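(* Let $n\ge 1$, let $V_1,\dots,V_n>0$, $R_1,\dots,R_n>0$, $p\in(0,1)$ and $z>0$. Then the system of equations in unknowns $a_0,b_0$ $$\frac{1-p}{p}b_0=\sum_{i=1}^n\frac{1+\frac{b_0}{a_0R_i}}{V_i-\frac{1}{a_0}-\frac{1}{b_0}},\qquad \frac{1}{zp}b_0-a_0=\sum_{i=1}^n\frac{1+\frac{a_0R_i}{b_0}}{V_i-\frac{1}{a_0}-\frac{1}{b_0}}$$ has a positive solution with $a_0>0$ and $b_0>0$.
   Context: These are the Hamling equations for log odds ratios: $R_i$ are reported odds ratios with reported variances $V_i$ (of the log odds ratios), $p$ is the ratio of unexposed controls to total controls, $z$ is the ratio of total controls to total cases, and $a_0,b_0$ are the reference-group pseudo-cases and pseudo-non-cases. *)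

From mathcomp Require Import all_boot all_order all_algebra.
From mathcomp Require Export reals.
Set Implicit Arguments. Unset Strict Implicit. Unset Printing Implicit Defensive.
Import Order.TTheory GRing.Theory Num.Theory.
Local Open Scope ring_scope.

Definition hden (R : realType) (Vi a0 b0 : R) : R := Vi - a0^-1 - b0^-1.

From mathcomp Require Import all_boot all_order all_algebra.
From mathcomp Require Import reals.
From mathcomp Require Import classical_sets topology normedtype realfun.
From mathcomp Require Import ring lra.
Set Implicit Arguments. Unset Strict Implicit. Unset Printing Implicit Defensive.
Import Order.TTheory GRing.Theory Num.Theory.
Import numFieldNormedType.Exports.
Local Open Scope ring_scope.

(* Substituting s := 1/a0 + 1/b0 and v := 1/b0 turns every denominator into
   V_i - s.  The second equation then says that v is a root of a quadratic
   whose root nearest to 0, v(s), lies in (0, s) and depends continuously on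
   s in (0, min V_i); the first says phi(s) = (1 - p)/p, where
   phi(s) := P(s) v(s) + Q(s) (s - v(s)) and P, Q are positive combinations
   of the 1/(V_i - s).  Since phi(s) is squeezed between two multiples of
   s/(min V_i - s), it runs from 0 to +oo, and the intermediate value theorem
   provides s. *)

Section RealFieldFacts.
Variable R : realFieldType.

Lemma mix_le (a b t s : R) :
  0 <= a -> 0 <= b -> 0 <= t -> t <= s -> a * t + b * (s - t) <= (a + b) * s.
Proof. by move=> *; nra. Qed.

Lemma mix_ge (a b c t s : R) :
  c <= a -> c <= b -> 0 <= t -> t <= s -> c * s <= a * t + b * (s - t).
Proof. by move=> *; nra. Qed.

Definition from_odds (m y : R) : R := m * y / (1 + y).

Lemma from_odds_spec (m y : R) : 0 < m -> 0 < y ->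
  [/\ 0 < from_odds m y, from_odds m y < m & from_odds m y / (m - from_odds m y) = y].
Proof.
move=> m_gt0 y_gt0; rewrite /from_odds.
have y1 : 0 < 1 + y by lra.
have -> : m - m * y / (1 + y) = m / (1 + y) by field; rewrite gt_eqF.
split.
- by rewrite divr_gt0 ?mulr_gt0.
- by rewrite ltr_pdivrMr // ltr_pM2l // ltrDr.
- by field; rewrite !gt_eqF.
Qed.

Lemma from_odds_le (m y1 y2 : R) : 0 <= m -> 0 <= y1 -> y1 <= y2 ->
  from_odds m y1 <= from_odds m y2.
Proof.
move=> m_ge0 y1_ge0 y12; rewrite /from_odds -!mulrA ler_wpM2l //.
rewrite ler_pdivrMr; last lra.
rewrite mulrAC ler_pdivlMr; last lra.
nra.
Qed.

End RealFieldFacts.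

Section SmallRoot.
Variable R : realType.

(* The root of E v^2 + B v - K nearest to 0, in the rationalised form that
   remains valid, and continuous, when E vanishes. *)
Definition small_root (E B K : R) : R :=
  2 * K / (B + Num.sqrt (B ^+ 2 + 4 * E * K)).

Lemma small_root_spec (E B K s : R) :
  0 < K -> 0 < B -> 0 < s -> 0 < E * s ^+ 2 + B * s - K ->
  let v := small_root E B K in [/\ 0 < v, v < s & E * v ^+ 2 + B * v - K = 0].
Proof.
move=> K0 B0 s0 qs v.
set D := B ^+ 2 + 4 * E * K.
have D0 : 0 <= D.
  have [E0|E0] := leP E 0; last by rewrite /D; nra.
  have -> : D = (2 * E * s + B) ^+ 2 - 4 * E * (E * s ^+ 2 + B * s - K)
    by rewrite /D; ring.
  have := sqr_ge0 (2 * E * s + B); nra.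
set r := Num.sqrt D.
have r0 : 0 <= r := sqrtr_ge0 D.
have rr : r ^+ 2 = D by rewrite sqr_sqrtr.
have Br : 0 < B + r by lra.
split.
- by rewrite /v /small_root -/D -/r divr_gt0 //; lra.
- rewrite /v /small_root -/D -/r ltr_pdivrMr //.
  (* squared, this is K - s B < E s^2 *)
  suff : 2 * K - s * B < s * r by lra.
  have [neg|pos] := ltP (2 * K - s * B) 0; first by nra.
  have : (2 * K - s * B) ^+ 2 < (s * r) ^+ 2.
    by rewrite exprMn rr /D; nra.
  have : 0 <= s * r by rewrite mulr_ge0 // ltW.
  nra.
- rewrite /v /small_root -/D -/r.
  have -> : E * (2 * K / (B + r)) ^+ 2 + B * (2 * K / (B + r)) - K
      = K * (4 * E * K + B ^+ 2 - r ^+ 2) / (B + r) ^+ 2.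
    by field; rewrite gt_eqF.
  have -> : 4 * E * K + B ^+ 2 - r ^+ 2 = 0 by rewrite rr /D; ring.
  by rewrite mulr0 mul0r.
Qed.

Lemma small_root_continuous (T : topologicalType) (E B K : T -> R) (x : T) :
  {for x, continuous E} -> {for x, continuous B} -> {for x, continuous K} ->
  0 < B x -> {for x, continuous (fun t => small_root (E t) (B t) (K t))}.
Proof.
move=> cE cB cK B0; rewrite /small_root.
have cD : {for x, continuous (fun t => B t ^+ 2 + 4 * E t * K t)}.
  apply: continuousD; first exact: continuousM.
  by apply: continuousM => //; apply: continuousM => //; exact: cst_continuous.
apply: continuousM; first by apply: continuousM => //; exact: cst_continuous.
apply: continuousV; first by rewrite gt_eqF // (lt_le_trans B0) // lerDl sqrtr_ge0.
apply: continuousD => //.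
exact: continuous_comp cD (@sqrt_continuous R _).
Qed.

End SmallRoot.

Lemma hden_invr (R : realType) (Vi x y : R) : hden Vi x^-1 y^-1 = Vi - (x + y).
Proof. by rewrite /hden !invrK opprD addrA. Qed.

Section WeightedResolvent.
Variables (R : realType) (n : nat) (V : 'I_n -> R).

Definition resolvent (w : 'I_n -> R) (s : R) : R := \sum_(i < n) w i / (V i - s).

Lemma resolventD (w1 w2 : 'I_n -> R) s :
  resolvent w1 s + resolvent w2 s = resolvent (fun i => w1 i + w2 i) s.
Proof. by rewrite /resolvent -big_split; apply: eq_bigr => i _; rewrite mulrDl. Qed.

Lemma resolvent_continuous w x :
  (forall i, x < V i) -> {for x, continuous (resolvent w)}.
Proof.
move=> xV; apply: (@cvg_big _ _ +%R 0 predT add_continuous) => // i _.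
suff : {for x, continuous (fun t => w i / (V i - t))} by [].
apply: continuousM; first exact: cst_continuous.
apply: continuousV; first by rewrite subr_eq0 gt_eqF.
by apply: continuousB; [exact: cst_continuous | exact: cvg_id].
Qed.

Variable s : R.
Hypothesis sV : forall i, s < V i.

Lemma resolvent_ge_term w j :
  (forall i, 0 <= w i) -> w j / (V j - s) <= resolvent w s.
Proof.
move=> w0; rewrite /resolvent (bigD1 j) //= lerDl.
by apply: sumr_ge0 => i _; rewrite divr_ge0 // subr_ge0 ltW.
Qed.

Lemma resolvent_ge0 w : (forall i, 0 <= w i) -> 0 <= resolvent w s.
Proof.
move=> w0; rewrite /resolvent; apply: sumr_ge0 => i _.
by rewrite divr_ge0 // subr_ge0 ltW.
Qed.

Lemma resolvent_le w m :
  (forall i, 0 <= w i) -> (forall i, m <= V i) -> s < m ->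
  resolvent w s <= (\sum_(i < n) w i) / (m - s).
Proof.
move=> w0 mV sm; rewrite /resolvent mulr_suml; apply: ler_sum => i _.
rewrite ler_wpM2l // lef_pV2 ?posrE ?subr_gt0 //.
by rewrite lerD2r.
Qed.

End WeightedResolvent.

Section Reduction.
Variables (R : realType) (n : nat) (V OR : 'I_n -> R) (k : R).
Hypotheses (OR_gt0 : forall i, 0 < OR i) (k_gt0 : 0 < k).

Local Notation P := (resolvent V (fun=> 1)).
Local Notation Q := (resolvent V (fun i => (OR i)^-1)).
Local Notation W := (resolvent V OR).

Definition recip_b0 (s : R) : R := small_root (W s - P s) (1 + P s * s + k) (s * k).

Definition hamling_phi (s : R) : R := P s * recip_b0 s + Q s * (s - recip_b0 s).

Local Notation phi := hamling_phi.

Variable m : R.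
Hypothesis m_le_V : forall i, m <= V i.

Lemma lt_V s : s < m -> forall i, s < V i.
Proof. by move=> sm i; exact: lt_le_trans sm (m_le_V i). Qed.

Lemma recip_b0_spec (s : R) : 0 < s -> s < m ->
  [/\ 0 < recip_b0 s, recip_b0 s < s &
      (W s - P s) * recip_b0 s ^+ 2 + (1 + P s * s + k) * recip_b0 s - s * k = 0].
Proof.
move=> s_gt0 /lt_V sV.
have P_ge0 : 0 <= P s by exact: resolvent_ge0.
have W_ge0 : 0 <= W s by apply: (resolvent_ge0 sV) => i; exact: ltW.
apply: small_root_spec => //; first exact: mulr_gt0.
  by rewrite addr_gt0 // ltr_pwDl // mulr_ge0 // ltW.
have -> : (W s - P s) * s ^+ 2 + (1 + P s * s + k) * s - s * k = W s * s ^+ 2 + s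
  by ring.
by rewrite ltr_wpDl // mulr_ge0 // sqr_ge0.
Qed.

Lemma hamling_phi_continuous (x : R) : 0 <= x -> x < m -> {for x, continuous phi}.
Proof.
move=> x_ge0 /lt_V xV.
have cP : {for x, continuous P} by exact: resolvent_continuous.
have cQ : {for x, continuous Q} by exact: resolvent_continuous.
have cW : {for x, continuous W} by exact: resolvent_continuous.
have cid : {for x, continuous (fun s : R => s)} by exact: cvg_id.
have cv : {for x, continuous recip_b0}.
  apply: small_root_continuous.
  - exact: continuousB.
  - apply: continuousD; last exact: cst_continuous.
    by apply: continuousD; [exact: cst_continuous | exact: continuousM].
  - by apply: continuousM => //; exact: cst_continuous.
  - by rewrite addr_gt0 // ltr_pwDl // mulr_ge0 // resolvent_ge0.
apply: continuousD; first exact: continuousM.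
by apply: continuousM => //; exact: continuousB.
Qed.

Lemma hamling_phi_le (s : R) : 0 < s -> s < m ->
  phi s <= (\sum_(i < n) (1 + (OR i)^-1)) * (s / (m - s)).
Proof.
move=> s_gt0 sm; have sV := lt_V sm.
have [v_gt0 vs _] := recip_b0_spec s_gt0 sm.
have w_ge0 i : 0 <= (OR i)^-1 by rewrite invr_ge0 ltW.
apply: (le_trans (mix_le _ _ (ltW v_gt0) (ltW vs))).
- exact: resolvent_ge0.
- exact: resolvent_ge0.
rewrite mulrCA [X in _ <= X]mulrC ler_pM2r // resolventD.
by apply: resolvent_le => // i; rewrite addr_ge0.
Qed.

Lemma hamling_phi_ge (s : R) j : V j = m -> 0 < s -> s < m ->
  (1 + OR j)^-1 * (s / (m - s)) <= phi s.
Proof.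
move=> Vj s_gt0 sm; have sV := lt_V sm.
have [v_gt0 vs _] := recip_b0_spec s_gt0 sm.
have ms_gt0 : 0 < m - s by rewrite subr_gt0.
rewrite mulrCA [X in X <= _]mulrC; apply: mix_ge (ltW v_gt0) (ltW vs).
- apply: le_trans (resolvent_ge_term sV j _) => //.
  rewrite Vj ler_pM2r ?invr_gt0 // invf_le1 ?lerDl ?ltW //.
  by rewrite addr_gt0.
- apply: le_trans (resolvent_ge_term sV j _) => [|i]; last by rewrite invr_ge0 ltW.
  by rewrite Vj ler_pM2r ?invr_gt0 // lef_pV2 ?posrE ?lerDr ?addr_gt0.
Qed.

Lemma hamling_phi_hits (c : R) j : V j = m -> 0 < m -> 0 < c ->
  exists2 s, 0 < s < m & phi s = c.
Proof.
move=> Vj m_gt0 c_gt0.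
set C := \sum_(i < n) (1 + (OR i)^-1).
have C_ge0 : 0 <= C by apply: sumr_ge0 => i _; rewrite addr_ge0 // invr_ge0 ltW.
set y1 := c / (C + 1); set y2 := (1 + OR j) * (c + 1).
have y1_gt0 : 0 < y1 by rewrite divr_gt0 // ltr_wpDl.
have y2_gt0 : 0 < y2 by rewrite mulr_gt0 // addr_gt0.
have [s1_gt0 s1m odds1] := from_odds_spec m_gt0 y1_gt0.
have [s2_gt0 s2m odds2] := from_odds_spec m_gt0 y2_gt0.
have phi1 : phi (from_odds m y1) < c.
  apply: le_lt_trans (hamling_phi_le s1_gt0 s1m) _.
  by rewrite -/C odds1 /y1 mulrA ltr_pdivrMr ?ltr_wpDl //; nra.
have phi2 : c < phi (from_odds m y2).
  apply: lt_le_trans (hamling_phi_ge Vj s2_gt0 s2m).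
  by rewrite odds2 /y2 mulKf ?gt_eqF ?addr_gt0 //; lra.
have y1_le_c : y1 <= c.
  by rewrite /y1 ler_pdivrMr ?ltr_wpDl // ler_peMr ?lerDr // ltW.
have c_le_y2 : c <= y2 by rewrite /y2; have := OR_gt0 j; nra.
have s12 : from_odds m y1 <= from_odds m y2.
  by apply: from_odds_le; [exact: ltW | exact: ltW | exact: le_trans y1_le_c c_le_y2].
have [s] : exists2 s, s \in `[from_odds m y1, from_odds m y2] & phi s = c.
  apply: IVT s12 _ _; last by rewrite ge_min le_max (ltW phi1) (ltW phi2) orbT.
  apply: continuous_in_subspaceT => x; rewrite in_setE /= in_itv /= => /andP[s1x xs2].
  apply: hamling_phi_continuous; first exact: ltW (lt_le_trans s1_gt0 s1x).
  exact: le_lt_trans xs2 s2m.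
rewrite in_itv /= => /andP[s1s ss2] phis; exists s => //.
by rewrite (lt_le_trans s1_gt0 s1s) (le_lt_trans ss2 s2m).
Qed.

Lemma hamling_solution (c s : R) : 0 < s -> s < m -> phi s = c ->
  exists a0 b0 : R,
    [/\ 0 < a0, 0 < b0,
        (forall i, hden (V i) a0 b0 != 0),
        c * b0 = \sum_(i < n) (1 + b0 / (a0 * OR i)) / hden (V i) a0 b0
      & k * b0 - a0 = \sum_(i < n) (1 + a0 * OR i / b0) / hden (V i) a0 b0].
Proof.
move=> s_gt0 sm <-; have sV := lt_V sm.
have := recip_b0_spec s_gt0 sm; rewrite /hamling_phi.
move: (recip_b0 s) => v [v_gt0 vs quad].
have vN0 : v != 0 by rewrite gt_eqF.
have svN0 : s - v != 0 by rewrite subr_eq0 gt_eqF.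
have hd i : hden (V i) (s - v)^-1 v^-1 = V i - s by rewrite hden_invr subrK.
exists (s - v)^-1, v^-1; split.
- by rewrite invr_gt0 subr_gt0.
- by rewrite invr_gt0.
- by move=> i; rewrite hd subr_eq0 gt_eqF.
- have -> : \sum_(i < n) (1 + v^-1 / ((s - v)^-1 * OR i)) / hden (V i) (s - v)^-1 v^-1
      = P s + (s - v) / v * Q s.
    rewrite /resolvent mulr_sumr -big_split /=; apply: eq_bigr => i _.
    by rewrite hd invfM invrK; ring.
  by field.
- have -> : \sum_(i < n) (1 + (s - v)^-1 * OR i / v^-1) / hden (V i) (s - v)^-1 v^-1
      = P s + v / (s - v) * W s.
    rewrite /resolvent mulr_sumr -big_split /=; apply: eq_bigr => i _.
    by rewrite hd invrK; ring.
  rewrite -[LHS]addr0 -(mul0r (v * (s - v))^-1) -quad.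
  by field; rewrite vN0 svN0.
Qed.

End Reduction.

Theorem theorem4 (R : realType) (n : nat) (V OR : 'I_n -> R) (p z : R) :
  (1 <= n)%N ->
  (forall i, 0 < V i) -> (forall i, 0 < OR i) ->
  0 < p -> p < 1 -> 0 < z ->
  exists a0 b0 : R,
    [/\ 0 < a0, 0 < b0,
        (forall i, hden (V i) a0 b0 != 0),
        (1 - p) / p * b0
          = \sum_(i < n) (1 + b0 / (a0 * OR i)) / hden (V i) a0 b0
      & (z * p)^-1 * b0 - a0
          = \sum_(i < n) (1 + a0 * OR i / b0) / hden (V i) a0 b0].
Proof.
move=> n_gt0 V_gt0 OR_gt0 p_gt0 p_lt1 z_gt0.
have [j _ Vj_min] := @arg_minP _ _ _ (Ordinal n_gt0) xpredT V isT.
have k_gt0 : 0 < (z * p)^-1 by rewrite invr_gt0 mulr_gt0.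
have c_gt0 : 0 < (1 - p) / p by rewrite divr_gt0 // subr_gt0.
have m_le_V i : V j <= V i by exact: Vj_min.
have [s /andP[s_gt0 sm] phis] := hamling_phi_hits OR_gt0 k_gt0 m_le_V erefl (V_gt0 j) c_gt0.
exact: hamling_solution phis.
Qed.
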